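(* Let $\mathbf{X}$ be a Banach space, $\mathcal{S}\subset\mathbf{X}$, let $\mathbb{P}$ be a Borel probability measure on $\mathcal{S}$ that is critical for $\mathcal{S}$ with respect to $\mathbf{X}$, and set $s^\ast := s^\ast_{\mathbf{X}}(\mathcal{S})$. Then: (i) Let $s>s^\ast$ and let $c=c(s)>0$, $\varepsilon_0=\varepsilon_0(s)>0$ be constants with $\mathbb{P}(\mathcal{S}\cap\mathcal{B}(\mathbf{x},\varepsilon;\mathbf{X}))\le 2^{-c\varepsilon^{-1/s}}$ for all $\mathbf{x}\in\mathbf{X}$ and $\varepsilon\in(0,\varepsilon_0)$. Then for any $R\in\mathbb{N}$ and any encoder/decoder pair $(E_R,D_R)$ of code-length $R$, \[\mathbb{P}^\ast(\{\mathbf{x}\in\mathcal{S}:\|\mathbf{x}-D_R(E_R(\mathbf{x}))\|_{\mathbf{X}}\le\varepsilon\})\le 2^{R-c\varepsilon^{-1/s}}\qquad\forall\varepsilon\in(0,\varepsilon_0).\] (ii) For every $s>s^\ast$ and every codec $\mathcal{C}$, $\mathbb{P}^\ast(\mathcal{A}^s_{\mathcal{S},\mathbf{X}}(\mathcal{C}))=0$. (iii) For every $0\le s<s^\ast$ there is a codec $\mathcal{C}=((E_R,D_R))_{R\in\mathbb{N}}$ and a constant $C>0$ with $\delta_{\mathcal{S},\mathbf{X}}(E_R,D_R)\le C\cdot R^{-s}$ for all $R\in\mathbb{N}$; in particular $\mathcal{A}^s_{\mathcal{S},\mathbf{X}}(\mathcal{C})=\mathcal{S}$ and $\mathbb{P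}(\mathcal{A}^s_{\mathcal{S},\mathbf{X}}(\mathcal{C}))=1$.
   Context: Let $(\mathbf{X},\|\cdot\|_{\mathbf{X}})$ be a real Banach space and $\mathcal{S}\subset\mathbf{X}$. An encoder/decoder pair of code-length $R\in\mathbb{N}$ is a pair $(E,D)$ with $E:\mathcal{S}\to\{0,1\}^R$, $D:\{0,1\}^R\to\mathbf{X}$; its distortion is $\delta_{\mathcal{S},\mathbf{X}}(E,D)=\sup_{\mathbf{x}\in\mathcal{S}}\|\mathbf{x}-D(E(\mathbf{x}))\|_{\mathbf{X}}$. A codec is a sequence $\mathcal{C}=((E_R,D_R))_{R\in\mathbb{N}}$ with $(E_R,D_R)$ of code-length $R$. The optimal compression rate is $s^\ast_{\mathbf{X}}(\mathcal{S})=\sup\{s\ge0:\exists\text{ codec with }\sup_R R^s\delta_{\mathcal{S},\mathbf{X}}(E_R,D_R)<\infty\}$. For $s\ge0$, $\mathcal{A}^s_{\mathcal{S},\mathbf{X}}(\mathcal{C})=\{\mathbf{x}\in\mathcal{S}:\sup_R R^s\|\mathbf{x}-D_R(E_R(\mathbf{x}))\|_{\mathbf{X}}<\infty\}$. $\mathcal{S}$ carries the trace $\sigma$-algebra $\{\mathcal{S}\cap B: B\text{ Borel in }\mathbf{X}\}$; Borel probability measures on $\mathcal{S}$ are probability measures on it, and $\mathbb{P}^\ast(M)=\inf\{\sum_n\mathbb{P}(M_n): M_n\text{ measurable}, M\subset\bigcup_nM_n\}$. $\mathcal{B}(\mathbf{x},\varepsilon;\mathbf{X})$ is the closed ball. A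 Borel probability measure $\mathbb{P}$ on $\mathcal{S}$ has (logarithmic) growth order $s_0\in[0,\infty)$ w.r.t. $\mathbf{X}$ if for every $s>s_0$ there exist $\varepsilon_0,c>0$ with $\mathbb{P}(\mathcal{S}\cap\mathcal{B}(\mathbf{x},\varepsilon;\mathbf{X}))\le2^{-c\varepsilon^{-1/s}}$ for all $\mathbf{x}\in\mathbf{X}$, $\varepsilon\in(0,\varepsilon_0)$. $\mathbb{P}$ is critical for $\mathcal{S}$ w.r.t. $\mathbf{X}$ if it has growth order $s^\ast_{\mathbf{X}}(\mathcal{S})$. *)

From HB Require Import structures.
From mathcomp Require Import all_boot all_order all_algebra.
From mathcomp Require Import all_classical all_reals all_analysis.
Set Implicit Arguments. Unset Strict Implicit. Unset Printing Implicit Defensive.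
Import Order.TTheory GRing.Theory Num.Theory.
Import numFieldNormedType.Exports.
Local Open Scope classical_set_scope.
Local Open Scope ring_scope.

Section Defs.
Context {R : realType} {X : completeNormedModType R}.

Definition borelX : set (set X) := <<s open >>.

Definition trace_sets (S : set X) : set (set X) := [set S `&` B | B in borelX].

(** P is a (Borel) probability measure on S (with its trace sigma-algebra);
    P is only meaningful on the sets of [trace_sets S]. *)
Definition prob_on (S : set X) (P : set X -> \bar R) : Prop :=
  [/\ P S = 1%E, P set0 = 0%E,
      (forall A, trace_sets S A -> (0 <= P A)%E) &
      (forall F : nat -> set X, (forall n, trace_sets S (F n)) ->
         trivIset setT F ->
         P (\bigcup_n F n) = (\sum_(n <oo) P (F n))%E)].

Definition outer (S : set X) (P : set X -> \bar R) (M : set X) : \bar R :=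
  ereal_inf [set (\sum_(n <oo) P (F n))%E | F in
     [set F : nat -> set X | (forall n, trace_sets S (F n)) /\
                             M `<=` \bigcup_n F n]].

Definition cball (x : X) (e : R) : set X := [set y | `|x - y| <= e].

Definition encdec (n : nat) : Type := ((X -> n.-tuple bool) * (n.-tuple bool -> X))%type.

(** codec: one encoder/decoder pair per code-length (index 0 unused: N = {1,2,...}) *)
Definition codec : Type := forall n : nat, encdec n.

Definition distortion (S : set X) (n : nat) (ED : encdec n) : \bar R :=
  ereal_sup [set (`|x - ED.2 (ED.1 x)|)%:E | x in S].

Definition optimal_rate (S : set X) : \bar R :=
  ereal_sup [set s%:E | s in [set s : R | 0 <= s /\
     exists C : codec,
       (ereal_sup [set ((n%:R `^ s)%:E * distortion S (C n))%E
                   | n in [set n : nat | (0 < n)%N]] < +oo)%E]].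

Definition approx_class (S : set X) (s : R) (C : codec) : set X :=
  [set x | S x /\
     (ereal_sup [set ((n%:R `^ s) * `|x - (C n).2 ((C n).1 x)|)%:E
                 | n in [set n : nat | (0 < n)%N]] < +oo)%E].

Definition growth_order (S : set X) (P : set X -> \bar R) (s0 : R) : Prop :=
  0 <= s0 /\
  forall s, s0 < s -> exists eps0 c : R, 0 < eps0 /\ 0 < c /\
    forall (x : X) (eps : R), 0 < eps < eps0 ->
      (P (S `&` cball x eps) <= (2 `^ (- (c * eps `^ (- s^-1))))%:E)%E.

Definition critical (S : set X) (P : set X -> \bar R) : Prop :=
  exists s0 : R, optimal_rate S = s0%:E /\ growth_order S P s0.

End Defs.

From HB Require Import structures.
From mathcomp Require Import all_boot all_order all_algebra.
From mathcomp Require Import all_classical all_reals all_analysis.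
From mathcomp Require Import lra.
Set Implicit Arguments. Unset Strict Implicit.
Import Order.TTheory GRing.Theory Num.Theory.
Import numFieldNormedType.Exports.
Local Open Scope classical_set_scope.
Local Open Scope ring_scope.

(* For (ii), fix s* < s1 < s2 < s.  A point of A^s(C) lies within n^-s2 of its
   n-th codeword for all large n, so for every n0 it is covered by the balls
   B(D_n b, n^-s2) with n >= n0 and b ranging over the 2^n codewords.  The
   growth order at s1 bounds the mass of each such ball by 4^-n, hence level n
   carries mass at most 2^-n and the whole cover at most 2^(1-n0).  Part (i) is
   the one-level version of this count, and (iii) unfolds the supremum defining
   s*: some codec has a rate above s. *)

Definition enum_tuple (n j : nat) : n.-tuple bool :=
  nth (nseq_tuple n false) (enum {: n.-tuple bool}) j.

Lemma enum_tuple_surj n (b : n.-tuple bool) :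
  exists2 j, (j < 2 ^ n)%N & enum_tuple n j = b.
Proof.
exists (index b (enum {: n.-tuple bool})).
  have := card_tuple n bool; rewrite card_bool cardE => <-.
  by rewrite index_mem mem_enum.
by rewrite /enum_tuple nth_index // mem_enum.
Qed.

Section real_facts.
Variable R : realType.

Lemma near_infty_powR_gt (a K : R) : 0 < a -> \forall n \near \oo, K < n%:R `^ a.
Proof.
move=> a_gt0; set b := `|K| + 1.
have b_gt0 : 0 < b by rewrite /b ltr_pwDr.
near=> n.
have bn : b `^ a^-1 <= n%:R by near: n; exact: nbhs_infty_ger.
apply: (@lt_le_trans _ _ b); first by rewrite /b; have := ler_norm K; lra.
have := @ge0_ler_powR R a (ltW a_gt0) (b `^ a^-1) n%:R.
rewrite !nnegrE powR_ge0 ler0n => /(_ isT isT bn).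
by rewrite -powRrM mulVf ?gt_eqF // powRr1 // ltW.
Unshelve. all: by end_near.
Qed.

Lemma ereal_sup_lt_pinfty_ub (A : set (\bar R)) :
  (ereal_sup A < +oo)%E -> exists M : R, forall a, A a -> (a <= M%:E)%E.
Proof.
case E: (ereal_sup A) => [M| |] // _.
  by exists M => a Aa; rewrite -E; exact: ereal_sup_ubound.
exists 0 => a Aa; have := ereal_sup_ubound Aa.
by rewrite E leeNy_eq => /eqP ->; exact: leNye.
Qed.

Lemma near_le_geometric_eq0 (x : \bar R) : (0 <= x)%E ->
  (\forall n \near \oo, x <= (2 * (2^-1) ^+ n)%:E)%E -> x = 0%E.
Proof.
have q_lt1 : `|2^-1 : R| < 1 by rewrite ger0_norm ?invr_ge0 // invf_lt1 ?ltr1n.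
have cvg0 := cvg_geometric 2 q_lt1.
case: x => [r| |] x_ge0 hx //.
  apply/eqP; rewrite eqe eq_le -[0 <= r]lee_fin x_ge0 andbT.
  rewrite -(cvg_lim _ cvg0) //; apply: limr_ge; first exact: cvgP cvg0.
  by near=> n; rewrite -lee_fin; near: n.
by have [n /=] := filter_ex hx; rewrite leye_eq.
Unshelve. all: by end_near.
Qed.

Lemma dyadic_sum_le (u : nat -> \bar R) (n0 : nat) : (0 < n0)%N ->
  (forall j, 0 <= u j)%E ->
  (forall j, (trunc_log 2 j < n0)%N -> u j = 0%E) ->
  (forall j, u j <= ((2^-1) ^+ (2 * trunc_log 2 j))%:E)%E ->
  forall m, (\sum_(0 <= j < m) u j <= (2 * (2^-1) ^+ n0)%:E)%E.
Proof.
move=> n0_gt0 u_ge0 u_low u_le; set q : R := 2^-1.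
have q2 : 2 * q = 1 by rewrite /q mulfV.
have block N : (\sum_(2 ^ N <= j < 2 ^ N.+1) u j <=
                (if (n0 <= N)%N then q ^+ N else 0)%:E)%E.
  have tl j : (2 ^ N <= j < 2 ^ N.+1)%N -> trunc_log 2 j = N.
    exact: trunc_log_eq.
  case: leqP => hN; last first.
    by rewrite big_nat_cond big1 // => j /andP[/tl jN _]; apply: u_low; rewrite jN.
  apply: le_trans (_ : \sum_(2 ^ N <= j < 2 ^ N.+1) (q ^+ (2 * N))%:E <= _)%E.
    rewrite big_nat_cond [X in (_ <= X)%E]big_nat_cond.
    by apply: lee_sum => j /andP[/tl jN _]; rewrite -jN.
  rewrite sumEFin lee_fin sumr_const_nat.
  have -> : (2 ^ N.+1 - 2 ^ N = 2 ^ N)%N by rewrite expnS mul2n -addnn addnK.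
  by rewrite -mulr_natl natrX exprM -exprMn expr2 mulrA q2 mul1r.
have prefix N : (\sum_(0 <= j < 2 ^ N) u j <=
                 (2 * q ^+ n0 - 2 * q ^+ maxn N n0)%:E)%E.
  elim: N => [|N IH].
    by rewrite expn0 big_nat1 (maxn_idPr (ltnW n0_gt0)) subrr u_low ?trunc_log0.
  rewrite (@big_cat_nat _ _ _ (2 ^ N)) //=; last by rewrite leq_pexp2l.
  apply: le_trans (leeD IH (block N)) _; rewrite -EFinD lee_fin.
  case: (leqP n0 N) => hN.
    rewrite (maxn_idPl (leqW hN)) exprSr.
    have : 2 * (q ^+ N * q) = q ^+ N by rewrite mulrCA q2 mulr1.
    lra.
  by rewrite (maxn_idPr hN) addr0.
move=> m; apply: le_trans (_ : \sum_(0 <= j < 2 ^ m) u j <= _)%E.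
  by apply: lee_sum_nneg_natr => //; exact: ltnW (ltn_expl m (ltnSn 1)).
apply: le_trans (prefix m) _.
by rewrite lee_fin lerBlDr lerDl mulr_ge0 // exprn_ge0 // invr_ge0.
Qed.

End real_facts.

Section codecs.
Context {R : realType} {X : completeNormedModType R}.
Variable S : set X.

Lemma approx_class_near_le (s s' : R) (C : codec) (x : X) :
  s' < s -> approx_class S s C x ->
  \forall n \near \oo, `|x - (C n).2 ((C n).1 x)| <= n%:R `^ (- s').
Proof.
move=> s's [_ /ereal_sup_lt_pinfty_ub [M xM]].
near=> n.
have n_gt0 : (0 < n)%N by near: n; exact: nbhs_infty_gt.
have : n%:R `^ s * `|x - (C n).2 ((C n).1 x)| <= M.
  by rewrite -lee_fin; apply: xM; exists n.
rewrite -ler_pdivlMl ?powR_gt0 ?ltr0n // => /le_trans; apply.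
have -> : n%:R `^ (- s') = (n%:R `^ s)^-1 * n%:R `^ (s - s').
  rewrite -powRN -powRD ?addrA ?addNr ?add0r //.
  by rewrite pnatr_eq0 -lt0n n_gt0 implybT.
rewrite ler_wpM2l ?invr_ge0 ?powR_ge0 // ltW //.
by near: n; apply: near_infty_powR_gt; rewrite subr_gt0.
Unshelve. all: by end_near.
Qed.

Lemma approx_class_eq_of_distortion (C : codec) (s K : R) :
  (forall n, (0 < n)%N -> (distortion S (C n) <= (K * n%:R `^ (- s))%:E)%E) ->
  approx_class S s C = S.
Proof.
move=> dist_le; apply/seteqP; split => x; first by case.
move=> Sx; split => //; apply: (@le_lt_trans _ _ K%:E); last exact: ltry.
apply: ge_ereal_sup => _ [n n_gt0 <-]; rewrite lee_fin.
have ns_gt0 : 0 < n%:R `^ s :> R by rewrite powR_gt0 // ltr0n.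
have : (`|x - (C n).2 ((C n).1 x)|%:E <= (K * n%:R `^ (- s))%:E)%E.
  by apply: le_trans (dist_le n n_gt0); apply: ereal_sup_ubound; exists x.
rewrite lee_fin powRN -ler_pdivlMl // => /le_trans; apply.
by rewrite mulrC.
Qed.

Lemma codec_of_lt_optimal_rate (s : R) : (s%:E < optimal_rate S)%E ->
  exists (C : codec) (K : R), 0 < K /\
    forall n, (0 < n)%N -> (distortion S (C n) <= (K * n%:R `^ (- s))%:E)%E.
Proof.
move=> /ereal_sup_gt [_ [s' [_ [C /ereal_sup_lt_pinfty_ub [M CM]]] <-]].
rewrite lte_fin => ss'.
exists C, (Num.max M 1); split => [|n n_gt0]; first by rewrite lt_max ltr01 orbT.
have n_ge1 : 1 <= n%:R :> R by rewrite ler1n.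
have : (distortion S (C n) <= ((n%:R `^ s')^-1)%:E * M%:E)%E.
  by rewrite lee_pdivlMl ?powR_gt0 ?(lt_le_trans ltr01) //; apply: CM; exists n.
move=> /le_trans; apply; rewrite -EFinM lee_fin mulrC -powRN.
apply: le_trans (_ : Num.max M 1 * n%:R `^ (- s') <= _).
  by rewrite ler_wpM2r ?powR_ge0 // le_max lexx.
by rewrite ler_wpM2l ?(le_trans ler01) ?le_max ?lexx ?orbT // ler_powR // lerN2 ltW.
Qed.

End codecs.

Section outer_measure.
Context {R : realType} {X : completeNormedModType R}.
Variables (S : set X) (P : set X -> \bar R).

Lemma trace_sets0 : trace_sets S set0.
Proof. by exists set0; [exact: sigma_algebra0 | rewrite setI0]. Qed.

Lemma trace_sets_cball (y : X) (r : R) : trace_sets S (S `&` cball y r).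
Proof.
exists (cball y r) => //.
have oC : open (~` cball y r) by rewrite openC; exact: closed_closed_ball_.
by rewrite -[cball y r]setCK; apply: sigma_algebraC; exact: sub_gen_smallest.
Qed.

Lemma le_outer (A B : set X) : A `<=` B -> (outer S P A <= outer S P B)%E.
Proof.
move=> AB; apply: ereal_inf_le_tmp => _ [F [tF BF] <-].
by exists F => //; split => //; exact: subset_trans AB BF.
Qed.

Hypothesis P_prob : prob_on S P.

Let P_ge0 A : trace_sets S A -> (0 <= P A)%E.
Proof. by case: P_prob => _ _ P_ge0 _; exact: P_ge0. Qed.

Let P0 : P set0 = 0%E. Proof. by case: P_prob. Qed.

Lemma outer_ge0 (A : set X) : (0 <= outer S P A)%E.
Proof.
apply: le_ereal_inf_tmp => _ [F [tF _] <-].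
by apply: nneseries_ge0 => n _ _; exact: P_ge0.
Qed.

Lemma outer_le_cover (A : set X) (F : nat -> set X) (l : \bar R) :
  (forall j, trace_sets S (F j)) -> A `<=` \bigcup_j F j ->
  (forall m, (\sum_(0 <= j < m) P (F j) <= l)%E) -> (outer S P A <= l)%E.
Proof.
move=> tF AF hm.
apply: le_trans (_ : (\sum_(j <oo) P (F j) <= l)%E).
  by apply: ereal_inf_lbound; exists F.
apply: lime_le; first by apply: is_cvg_nneseries => j _ _; exact/P_ge0/tF.
exact: nearW.
Qed.

Lemma outer_code_le n (ED : encdec n) (r beta : R) :
  (forall y, (P (S `&` cball y r) <= beta%:E)%E) ->
  (outer S P [set x | S x /\ (`|x - ED.2 (ED.1 x)| <= r)%R]
     <= (2 ^+ n * beta)%R%:E)%E.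
Proof.
move=> Pball.
have beta_ge0 : 0 <= beta.
  by rewrite -lee_fin (le_trans _ (Pball 0)) // P_ge0 //; exact: trace_sets_cball.
pose F j := if (j < 2 ^ n)%N then S `&` cball (ED.2 (enum_tuple n j)) r else set0.
have tF j : trace_sets S (F j).
  by rewrite /F; case: ifP => _; [exact: trace_sets_cball | exact: trace_sets0].
apply: (outer_le_cover tF).
  move=> x [Sx hx]; have [j jn ej] := enum_tuple_surj (ED.1 x).
  by exists j => //; rewrite /F jn ej; split => //; rewrite /cball /= distrC.
move=> m; apply: le_trans (_ : \sum_(0 <= j < maxn m (2 ^ n)) P (F j) <= _)%E.
  by apply: lee_sum_nneg_natr => [j _ _|]; [exact: P_ge0 | exact: leq_maxl].
rewrite (@big_cat_nat _ _ _ (2 ^ n)) ?leq_maxr //= [X in (_ + X)%E]big_nat_cond.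
rewrite [X in (_ + X)%E]big1 ?adde0; last first.
  by move=> j /andP[/andP[nj _] _]; rewrite /F ltnNge nj.
apply: le_trans (_ : \sum_(0 <= j < 2 ^ n) beta%:E <= _)%E.
  by apply: lee_sum => j _; rewrite /F; case: ifP => _; rewrite ?P0.
by rewrite sumEFin sumr_const_nat subn0 -[beta *+ _]mulr_natl natrX.
Qed.

Lemma outer_limsup_cball_eq0 (z : forall n, n.-tuple bool -> X) (r : nat -> R)
    (n1 : nat) :
  (forall N y, (n1 <= N)%N ->
     (P (S `&` cball y (r N)) <= ((2^-1) ^+ (2 * N))%:E)%E) ->
  outer S P [set x | S x /\ forall n0, exists2 n, (n0 <= n)%N &
                       exists b, (`|x - z n b| <= r n)%R] = 0%E.
Proof.
move=> Pball; apply: near_le_geometric_eq0; first exact: outer_ge0.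
near=> n0.
(* index j enumerates the codeword j - 2^N of level N = trunc_log 2 j *)
pose F j := let N := trunc_log 2 j in
  if (n0 <= N)%N then S `&` cball (z N (enum_tuple N (j - 2 ^ N))) (r N)
  else set0.
have tF j : trace_sets S (F j).
  by rewrite /F; case: ifP => _; [exact: trace_sets_cball | exact: trace_sets0].
apply: (outer_le_cover tF).
  move=> x [Sx /(_ n0) [n n0n [b xb]]]; have [k kn kb] := enum_tuple_surj b.
  have tl : trunc_log 2 (2 ^ n + k) = n.
    by apply: trunc_log_eq => //; rewrite leq_addr expnS mul2n -addnn ltn_add2l.
  exists (2 ^ n + k)%N => //.
  by rewrite /F /= tl n0n addKn kb; split => //; rewrite /cball /= distrC.
apply: dyadic_sum_le => [|j|j|j]; rewrite /F /=.
- by near: n0; exact: nbhs_infty_gt.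
- by case: ifP => _; [exact/P_ge0/trace_sets_cball | rewrite P0].
- by rewrite ltnNge => /negbTE ->.
case: ifP => n0j; last by rewrite P0.
apply: Pball; apply: leq_trans n0j; near: n0; exact: nbhs_infty_ge.
Unshelve. all: by end_near.
Qed.

Lemma near_cball_mass_le (s1 s2 c eps0 : R) : 0 < s1 < s2 -> 0 < c -> 0 < eps0 ->
  (forall x eps, 0 < eps < eps0 ->
     (P (S `&` cball x eps) <= (2 `^ (- (c * eps `^ (- s1^-1))))%:E)%E) ->
  \forall N \near \oo, forall y,
     (P (S `&` cball y (N%:R `^ (- s2))) <= ((2^-1) ^+ (2 * N))%:E)%E.
Proof.
move=> /andP[s1_gt0 s12] c_gt0 eps0_gt0 Pball.
have e_gt0 : 0 < s2 / s1 - 1 by rewrite subr_gt0 ltr_pdivlMr // mul1r.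
near=> N => y.
have N_gt0 : 0 < N%:R :> R by near: N; exact: nbhs_infty_gtr.
have r_in : 0 < N%:R `^ (- s2) < eps0.
  rewrite powR_gt0 //= powRN -[eps0]invrK ltf_pV2 ?posrE ?invr_gt0 ?powR_gt0 //.
  by near: N; exact: near_infty_powR_gt (lt_trans s1_gt0 s12).
apply: le_trans (Pball _ _ r_in) _; rewrite lee_fin.
have -> : (N%:R `^ (- s2)) `^ (- s1^-1) = N%:R * N%:R `^ (s2 / s1 - 1).
  rewrite -powRrM mulrNN -{1}(subrK 1 (s2 / s1)) powRD; last first.
    by rewrite (gt_eqF N_gt0) implybT.
  by rewrite powRr1 ?(ltW N_gt0) // mulrC.
have two_le : 2 <= c * N%:R `^ (s2 / s1 - 1).
  rewrite -ler_pdivrMl // mulrC ltW //.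
  by near: N; exact: near_infty_powR_gt.
apply: le_trans (_ : 2 `^ (- (2 * N)%:R) <= _); last first.
  by rewrite powRN powR_mulrn // exprVn.
rewrite ler_powR ?ler1n // lerN2 natrM mulrCA mulrC ler_wpM2l // ltW.
Unshelve. all: by end_near.
Qed.

Lemma outer_approx_class_eq0 (s0 s : R) (C : codec) :
  growth_order S P s0 -> s0 < s -> outer S P (approx_class S s C) = 0%E.
Proof.
move=> [s0_ge0 growth] s0s.
set s1 := (2 * s0 + s) / 3; set s2 := (s0 + 2 * s) / 3.
have s0s1 : s0 < s1 by rewrite /s1; lra.
have s1s2 : 0 < s1 < s2 by apply/andP; rewrite /s1 /s2; split; lra.
have s2s : s2 < s by rewrite /s2; lra.
have [eps0 [c [eps0_gt0 [c_gt0 Pball]]]] := growth s1 s0s1.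
have [n1 _ Pball_r] := near_cball_mass_le s1s2 c_gt0 eps0_gt0 Pball.
apply/eqP; rewrite eq_le outer_ge0 andbT.
rewrite -(@outer_limsup_cball_eq0 (fun n => (C n).2) (fun n => n%:R `^ (- s2)) n1);
  last by move=> N y n1N; exact: Pball_r.
apply: le_outer => x Ax; split; first by case: Ax.
move=> n0; have /filter_ex [n [n0n xn]] : \forall n \near \oo,
    (n0 <= n)%N /\ `|x - (C n).2 ((C n).1 x)| <= n%:R `^ (- s2).
  by near=> n; split; near: n; [exact: nbhs_infty_ge | exact: approx_class_near_le s2s Ax].
by exists n => //; exists ((C n).1 x).
Unshelve. all: by end_near.
Qed.

End outer_measure.

Unset Implicit Arguments.

Theorem theorem2p2 (R : realType) (X : completeNormedModType R)
  (S : set X) (P : set X -> \bar R) (sst : R) :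
  prob_on S P -> critical S P -> optimal_rate S = sst%:E ->
  (* (i) *)
  (forall s c eps0 : R, sst < s -> 0 < c -> 0 < eps0 ->
     (forall (x : X) (eps : R), 0 < eps < eps0 ->
        (P (S `&` cball x eps) <= (2 `^ (- (c * eps `^ (- s^-1))))%:E)%E) ->
     forall (n : nat) (ED : encdec n), (0 < n)%N ->
     forall eps : R, 0 < eps < eps0 ->
       (outer S P [set x | S x /\ (`|x - ED.2 (ED.1 x)| <= eps)%R]
          <= (2 `^ (n%:R - c * eps `^ (- s^-1)))%:E)%E) /\
  (* (ii) *)
  (forall (s : R) (C : codec), sst < s -> outer S P (approx_class S s C) = 0%E) /\
  (* (iii) *)
  (forall s : R, 0 <= s < sst ->
     exists (C : codec) (K : R), 0 < K /\
       (forall n : nat, (0 < n)%N ->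
          (distortion S (C n) <= (K * n%:R `^ (- s))%:E)%E) /\
       approx_class S s C = S /\ P (approx_class S s C) = 1%E).
Proof.
move=> P_prob [s0 [rate_s0 growth]]; rewrite rate_s0 => -[<-].
split; [|split].
- move=> s c eps0 _ _ _ Pball n ED _ eps eps_in.
  rewrite powRD ?pnatr_eq0 ?implybT // powR_mulrn //.
  by apply: outer_code_le => // y; exact: Pball.
- by move=> s C; exact: outer_approx_class_eq0.
- move=> s /andP[_ s_lt].
  have [|C [K [K_gt0 dist_le]]] := @codec_of_lt_optimal_rate _ _ S s.
    by rewrite rate_s0 lte_fin.
  have approxE := approx_class_eq_of_distortion dist_le.
  by exists C, K; rewrite approxE; case: P_prob.
Qed.
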